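(* Let $n\geq 3$ be an integer and $p$ a prime with $\gcd(n,p(p-1))=1$. Let $F(x_1,\ldots,x_r)=a_1x_1^n+a_2x_2^n+\cdots+a_rx_r^n$ with $a_1,\ldots,a_r$ integers such that $r>\frac{n}{2}$, $a_1a_2\cdots a_r\neq 0$, and $\nu_p(a_i)\not\equiv\nu_p(a_j)\pmod n$ for all $1\leq i<j\leq r$. Then $R(F)$ is dense in $\mathbb{Q}_p$.
   Context: For an integral form $F$ in $r$ variables, $R(F)=\{F(\overline{x})/F(\overline{y}):\overline{x},\overline{y}\in\mathbb{Z}^r,\ F(\overline{y})\neq 0\}$, viewed as a subset of the field $\mathbb{Q}_p$ of $p$-adic numbers with its $p$-adic topology. $\nu_p$ denotes the $p$-adic valuation. *)

From mathcomp Require Import all_boot all_order all_algebra.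
Set Implicit Arguments. Unset Strict Implicit. Unset Printing Implicit Defensive.
Import Order.TTheory GRing.Theory Num.Theory.
Local Open Scope ring_scope.

Definition padic_val (p : nat) (q : rat) : int :=
  (logn p `|numq q|%N)%:Z - (logn p `|denq q|%N)%:Z.

(* a and b are p-adically within p^(-k): |a - b|_p <= p^(-k),
   i.e. a = b or nu_p(a - b) >= k. *)
Definition padic_close (p : nat) (k : int) (a b : rat) : Prop :=
  a = b \/ (a != b /\ k <= padic_val p (a - b)).

Definition diag_form (r n : nat) (a : 'I_r -> int) (x : 'I_r -> int) : int :=
  \sum_(i < r) a i * x i ^+ n.

(* R(F) = { F(x)/F(y) : x, y in Z^r, F(y) <> 0 } as a subset of Q. *)
Definition ratio_set (r n : nat) (a : 'I_r -> int) (t : rat) : Prop :=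
  exists x y : 'I_r -> int,
    diag_form n a y != 0 /\ t = (diag_form n a x)%:~R / (diag_form n a y)%:~R.

(* A subset S of Q is dense in Q_p.  Since Q is dense in Q_p, this is
   equivalent to: every rational q can be approximated p-adically to any
   precision by elements of S. *)
Definition dense_in_Qp (p : nat) (S : rat -> Prop) : Prop :=
  forall (q : rat) (k : int), exists t, S t /\ padic_close p k t q.

(* If n < 2r and the valuations v_p(a_l) are pairwise distinct mod n, the
   families v_p(a_l) + v_p(den q) and v_p(a_l) + v_p(num q) share a residue
   mod n, so for some i, j the integers c = a_i den q and c' = a_j num q have
   valuations congruent mod n.  As n is prime to p(p-1), it is odd and prime
   to phi(p^K), so z |-> z^n is invertible on the units mod p^K; this yields
   integers x, y with c x^n = c' y^n up to relative precision p^K, that is,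
   a_i x^n / (a_j y^n) is p-adically close to q. *)

From mathcomp Require Import all_boot all_order all_algebra.
From mathcomp Require cyclic.
From mathcomp Require Import zify ring.
Import Order.TTheory GRing.Theory Num.Theory.
Local Open Scope ring_scope.

Lemma PoszX (m k : nat) : (m ^ k)%N%:Z = m%:Z ^+ k.
Proof. by rewrite -!natz natrX. Qed.

Lemma pfactor_coprimez {p : nat} {z : int} : prime p -> z != 0 ->
  exists2 u : int, ~~ (p %| `|u|)%N & z = u * p%:Z ^+ logn p `|z|.
Proof.
move=> pp z0.
have [m pm em] := pfactor_coprime pp (etrans (absz_gt0 z) z0).
exists ((-1) ^+ (z < 0)%R * m%:Z).
  by rewrite abszMsign -prime_coprime.
by rewrite -PoszX -mulrA -PoszM -em -intEsign.
Qed.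

Lemma logn_pfactorMz (p e : nat) (u : int) : prime p -> ~~ (p %| `|u|)%N ->
  logn p `|u * p%:Z ^+ e| = e.
Proof.
move=> pp pu.
have u0 : (0 < `|u|)%N by rewrite lt0n; apply: contraNneq pu => ->.
rewrite abszM abszX absz_nat lognM ?expn_gt0 ?(prime_gt0 pp) // pfactorK //.
by rewrite logn_coprime ?prime_coprime.
Qed.

Lemma padic_val_intr_div (p : nat) (P Q : int) : P != 0 -> Q != 0 ->
  padic_val p (P%:~R / Q%:~R) = (logn p `|P|)%:Z - (logn p `|Q|)%:Z.
Proof.
move=> P0 Q0; set t := _ / _.
have t0 : t != 0 by rewrite mulf_neq0 ?invr_eq0 ?intr_eq0.
have cross : numq t * Q = P * denq t.
  apply: (@intr_inj rat); rewrite !rmorphM /=; apply/eqP.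
  by rewrite -eqr_div ?intr_eq0 ?denq_neq0 // divq_num_den.
have := congr1 (fun z : int => logn p `|z|) cross => /=.
rewrite !abszM !lognM ?absz_gt0 ?numq_eq0 ?denq_neq0 // /padic_val; lia.
Qed.

Lemma padic_close_intr_div {p m : nat} {k : int} {t q : rat} {P Q : int} :
  prime p -> Q != 0 -> t - q = P%:~R / Q%:~R -> ((p ^ m)%N%:Z %| P)%Z ->
  k <= m%:Z - (logn p `|Q|)%:Z -> padic_close p k t q.
Proof.
move=> pp Q0 tq dvdP le_k.
have [-> | tq0] := eqVneq t q; [by left | right; split=> //].
have P0 : P != 0.
  by apply: contraNneq tq0 => P0; rewrite -subr_eq0 tq P0 mul0r.
move: dvdP; rewrite dvdzE /= pfactor_dvdn ?absz_gt0 // => le_m.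
rewrite tq padic_val_intr_div //; lia.
Qed.

Lemma injective_images_meet {I J T : finType} (f : I -> T) (g : J -> T) :
  injective f -> injective g -> (#|T| < #|I| + #|J|)%N -> exists i j, f i = g j.
Proof.
move=> f_inj g_inj card_lt.
have : (0 < #|f @: [set: I] :&: g @: [set: J]|)%N.
  have := cardsUI (f @: [set: I]) (g @: [set: J]).
  have := max_card (f @: [set: I] :|: g @: [set: J]).
  rewrite !card_imset // !cardsT; lia.
case/card_gt0P=> _ /setIP[/imsetP[i _ ->] /imsetP[j _ fg]].
by exists i, j.
Qed.

Lemma shifted_residues_meet {n r : nat} {f : 'I_r -> nat} (s s' : nat) :
  (0 < n)%N -> (n < 2 * r)%N -> (forall i j, f i = f j %[mod n] -> i = j) ->
  exists i j, (f i + s = f j + s' %[mod n])%N.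
Proof.
move=> n0 nr f_inj.
pose res s0 i : 'I_n := Ordinal (ltn_pmod (f i + s0) n0).
have res_inj s0 : injective (res s0).
  by move=> i j /(congr1 val) /eqP /=; rewrite eqn_modDr => /eqP /f_inj.
have [|i [j /(congr1 val) ?]] :=
  injective_images_meet (res s) (res s') (res_inj s) (res_inj s').
  by rewrite !card_ord; lia.
by exists i, j.
Qed.

(* The factor 2 makes the exponent even, so that Euler's theorem for the
   natural number |z| applies to z. *)
Lemma dvdz_exp_2totientS (m t : nat) (z : int) : coprime `|z| m ->
  (m%:Z %| z ^+ (2 * totient m * t).+1 - z)%Z.
Proof.
move=> zm.
have euler : (`|z| ^ (2 * totient m * t) = 1 %[mod m])%N.
  rewrite -mulnA mulnCA expnM -modnXm cyclic.Euler_exp_totient //.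
  by rewrite modnXm exp1n.
have even : z ^+ (2 * totient m * t) = (`|z| ^ (2 * totient m * t))%N%:Z.
  by rewrite -abszX abszE ger0_norm // -mulnA exprM exprn_ge0 // sqr_ge0.
rewrite exprS even -[X in _ - X]mulr1 -mulrBr; apply: dvdz_mull.
by rewrite -eqz_mod_dvd -[1]/(1%N%:Z) !modz_nat euler.
Qed.

Lemma exists_inverse_exponent {n M : nat} : (1 < M)%N -> coprime n M ->
  exists d t, (d * n = (M * t).+1)%N.
Proof.
move=> M1 nM; have T0 : (0 < totient M)%N by rewrite totient_gt0; lia.
exists (n ^ (totient M).-1)%N, (n ^ totient M %/ M)%N.
rewrite -expnSr prednK // {1}(divn_eq (n ^ totient M) M).
by rewrite cyclic.Euler_exp_totient // modn_small // mulnC addn1.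
Qed.

Lemma coprime_2totient_pfactor (K : nat) {n p : nat} : prime p ->
  coprime n (p * (p - 1)) -> coprime n (2 * totient (p ^ K)).
Proof.
move=> pp np; rewrite coprimeMr; apply/andP; split.
  apply: coprime_dvdr np; rewrite dvdn2 oddM oddB ?prime_gt0 //=.
  by case: (odd p).
case: K => [|K]; first exact: coprimen1.
move: np; rewrite coprimeMr subn1 => /andP[np np1].
by rewrite totient_pfactor // coprimeMr np1 coprimeXr.
Qed.

Lemma exists_nth_root_exponent (K : nat) {n p : nat} :
  prime p -> coprime n (p * (p - 1)) ->
  exists d, forall z : int,
    ~~ (p %| `|z|)%N -> ((p ^ K)%N%:Z %| z ^+ (d * n) - z)%Z.
Proof.
move=> pp np.
have T0 : (0 < totient (p ^ K))%N by rewrite totient_gt0 expn_gt0 prime_gt0.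
have [|d [t dn]] :=
  exists_inverse_exponent _ (coprime_2totient_pfactor K pp np).
  by lia.
exists d => z pz; rewrite dn; apply: dvdz_exp_2totientS.
by rewrite coprime_sym coprimeXl // prime_coprime.
Qed.

Lemma exists_binary_form_approx (K : nat) {n p : nat} {c c' : int} :
  prime p -> coprime n (p * (p - 1)) -> c != 0 -> c' != 0 ->
  (logn p `|c| = logn p `|c'| %[mod n])%N ->
  exists x y : int, y != 0 /\
    ((p ^ (K + logn p `|(c' * y ^+ n)%R|))%N%:Z %| c * x ^+ n - c' * y ^+ n)%Z.
Proof.
move=> pp np c0 c'0; set al := logn p `|c|; set be := logn p `|c'| => al_be.
have [u pu ->] := pfactor_coprimez pp c0.
have [u' pu' ->] := pfactor_coprimez pp c'0.
have [d hd] := exists_nth_root_exponent K pp np.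
pose E := (al + n * (be %/ n))%N.
have E_sym : E = (be + n * (al %/ n))%N.
  by rewrite /E {1}(divn_eq al n) {2}(divn_eq be n) al_be; lia.
exists (p%:Z ^+ (be %/ n) * u' ^+ d), (p%:Z ^+ (al %/ n) * u ^+ d).
have p0 : p%:Z != 0 by rewrite eqz_nat -lt0n prime_gt0.
have u0 : u != 0 by apply: contraNneq pu => ->.
have cx : u * p%:Z ^+ al * (p%:Z ^+ (be %/ n) * u' ^+ d) ^+ n
          = u * u' ^+ (d * n) * p%:Z ^+ E.
  by rewrite /E exprD exprM mulnC exprM exprMn; ring.
have cy : u' * p%:Z ^+ be * (p%:Z ^+ (al %/ n) * u ^+ d) ^+ n
          = u' * u ^+ (d * n) * p%:Z ^+ E.
  by rewrite E_sym exprD exprM mulnC exprM exprMn; ring.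
have pu'u : ~~ (p %| `|(u' * u ^+ (d * n))%R|)%N.
  rewrite abszM abszX Euclid_dvdM // Euclid_dvdX //.
  by rewrite (negbTE pu') (negbTE pu).
split; first by rewrite mulf_neq0 ?expf_neq0.
rewrite cx cy logn_pfactorMz // -mulrBl PoszX exprD.
apply: dvdz_mul; last exact: dvdzz.
have -> : u * u' ^+ (d * n) - u' * u ^+ (d * n)
          = u * (u' ^+ (d * n) - u') - u' * (u ^+ (d * n) - u) by ring.
by apply: rpredB; apply: dvdz_mull; rewrite -PoszX; apply: hd.
Qed.

Lemma diag_form_single (r n : nat) (a : 'I_r -> int) (i : 'I_r) (c : int) :
  (0 < n)%N -> diag_form n a (fun l => if l == i then c else 0) = a i * c ^+ n.
Proof.
move=> n0; rewrite /diag_form (bigD1 i) //= eqxx big1 ?addr0 //.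
by move=> l /negbTE ->; rewrite expr0n gtn_eqF // mulr0.
Qed.

Lemma ratio_set_monomials {r n : nat} (a : 'I_r -> int) (i j : 'I_r)
    (x y : int) :
  (0 < n)%N -> a j * y ^+ n != 0 ->
  ratio_set n a ((a i * x ^+ n)%:~R / (a j * y ^+ n)%:~R).
Proof.
move=> n0 den0.
exists (fun l => if l == i then x else 0), (fun l => if l == j then y else 0).
by rewrite !diag_form_single.
Qed.

Theorem theorem1p3 (n p r : nat) (a : 'I_r -> int) :
  (3 <= n)%N -> prime p -> coprime n (p * (p - 1)) ->
  (n < 2 * r)%N ->
  (forall i, a i != 0) ->
  (forall i j : 'I_r, i != j ->
     ~ (logn p `|a i|%N = logn p `|a j|%N %[mod n])) ->
  dense_in_Qp p (ratio_set n a).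
Proof.
move=> n_ge3 pp np nr a0 a_val q k.
have n0 : (0 < n)%N by lia.
have [-> | q0] := eqVneq q 0.
  have i0 : 'I_r by exists 0%N; lia.
  exists 0; split; last by left.
  have := ratio_set_monomials a i0 i0 0 1 n0.
  by rewrite expr1n mulr1 expr0n gtn_eqF // mulr0 mul0r; apply.
have val_inj i j : logn p `|a i| = logn p `|a j| %[mod n] -> i = j.
  by move=> eq_ij; case: (eqVneq i j) => // /a_val /(_ eq_ij).
have [i [j val_ij]] := shifted_residues_meet
  (logn p `|denq q|) (logn p `|numq q|) n0 nr val_inj.
have num0 : numq q != 0 by rewrite numq_eq0.
have val_c : logn p `|a i * denq q| = logn p `|a j * numq q| %[mod n].
  by move: val_ij; rewrite !abszM !lognM ?absz_gt0 ?a0 ?denq_neq0.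
have [x [y [y0 close]]] := exists_binary_form_approx (`|k| + logn p `|denq q|)
  pp np (mulf_neq0 (a0 i) (denq_neq0 q)) (mulf_neq0 (a0 j) num0) val_c.
have den0 : a j * y ^+ n != 0 by rewrite mulf_neq0 ?expf_neq0 ?a0.
exists ((a i * x ^+ n)%:~R / (a j * y ^+ n)%:~R).
split; first exact: ratio_set_monomials.
apply: (padic_close_intr_div pp (mulf_neq0 den0 (denq_neq0 q)) _ close).
  rewrite -[q in LHS]divq_num_den !intrM intrB !intrM.
  field; apply/and3P; split; rewrite intr_eq0 ?expf_neq0 //; exact: denq_neq0.
rewrite !abszM !lognM ?muln_gt0 ?absz_gt0 ?a0 ?expf_neq0 ?denq_neq0 //.
have le_k : k <= `|k|%N by rewrite abszE ler_norm.
clear -le_k; lia.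
Qed.
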